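(* Let a target $T$ be fixed at a point $(x_T,y_T)\in\mathbb{R}^2$, and consider a UAV with dynamics $\dot x=V\cos\psi$, $\dot y=V\sin\psi$, $\dot\psi=\omega$, $V>0$ constant. Let $r(t)$ be the distance from the UAV to $T$ and $\theta(t)\in[0,2\pi)$ the bearing angle. Let $r_d>0$ be a desired radius, let $k>\frac{1}{r_d}$, let $r_a=\sqrt{r_d^2-\frac{1}{k^2}}$, and let the control input be $$\omega=\begin{cases} k\left[V\cos\!\left(\pi-\sin^{-1}\!\left(\frac{r_a}{r(t)}\right)\right)-\dot r(t)\right], & r(t)\ge r_a,\\ 0,&\text{otherwise}.\end{cases}$$ Then, for every initial condition, $r(t)\to r_d$ and $\theta(t)\to\frac{\pi}{2}$ as $t\to\infty$.
   Context: The bearing angle $\theta(t)\in[0,2\pi)$ is the angle measured counterclockwise from the vector pointing from the UAV's current position to $T$ to the UAV's current heading $(\cos\psi,\sin\psi)$. In these variables the dynamics read $\dot r=-V\cos\theta$, $\dot\theta=\omega+\frac{V\sin\theta}{r}$. $\sin^{-1}$ is the principal arcsine. *)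

From Stdlib Require Import Reals.
From Coquelicot Require Import Coquelicot.
Open Scope R_scope.

Definition dist_to_target (xT yT px py : R) : R :=
  sqrt ((xT - px) ^ 2 + (yT - py) ^ 2).

(* Bearing angle in [0, 2*PI): angle measured counterclockwise from the
   line-of-sight vector u = T - p to the heading h = (cos psi, sin psi).
   cos theta = (u . h)/|u|, sin theta = (u x h)/|u|. *)
Definition bearing (xT yT px py psi : R) : R :=
  let ux := xT - px in
  let uy := yT - py in
  let r := dist_to_target xT yT px py in
  let c := (ux * cos psi + uy * sin psi) / r in
  let s := (ux * sin psi - uy * cos psi) / r in
  if Rle_dec 0 s then acos c else 2 * PI - acos c.

Definition control (V k rd r rdot : R) : R :=
  let ra := sqrt (rd ^ 2 - 1 / k ^ 2) in
  if Rle_dec ra r then k * (V * cos (PI - asin (ra / r)) - rdot) else 0.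

From Stdlib Require Import Reals Lra Psatz Classical.
From Coquelicot Require Import Coquelicot.
Open Scope R_scope.

(* The control switches discontinuously on the circle [r = ra], so the heading [psi] is only
   Lipschitz and has merely right derivatives, each given by one branch of the law; monotonicity
   is therefore argued through a mean value inequality for right derivatives.
   Write [rcos = r cos theta] and [rsin = r sin theta]. The function [rsin - k Phi (r ^ 2)],
   with [Phi' z = sqrt (z - ra ^ 2) / (2 sqrt z)] outside the circle, is nondecreasing, which
   bounds [r]; subtracting [eta rcos ^ 3] makes its rate dominate [rcos ^ 2], so [rcos -> 0].
   The rate of [rcos] is then close to [- V + k V sqrt (rsin ^ 2 - ra ^ 2)] (the root taken with
   the sign of [rsin]), a quantity that varies slowly, so it must tend to 0: [rsin -> sqrt (ra ^ 2 + 1 / k ^ 2) = rd]. *)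

Lemma continuous_right_near (f : R -> R) (u eps : R) : continuous f u -> 0 < eps ->
  exists d, 0 < d /\ forall z, u < z < u + d -> Rabs (f z - f u) < eps.
Proof.
  intros Hf Heps.
  destruct (proj1 (filterlim_locally f (f u)) Hf (mkposreal eps Heps)) as [d Hd].
  exists d. split; [apply cond_pos|]. intros z Hz.
  apply (Hd z). change (Rabs (z - u) < d). rewrite Rabs_pos_eq; lra.
Qed.

Lemma continuous_ge_at_left (g : R -> R) (a s c : R) : s < c -> continuous g c ->
  (forall w, s <= w < c -> a <= g w) -> a <= g c.
Proof.
  intros Hsc Hc Hg.
  apply (closed_filterlim_loc (F := at_left c) g (fun z => a <= z)).
  - apply (filterlim_filter_le_1 (F := locally c)); [|exact Hc].
    intros P [d Hd]. exists d; intros y Hy _. now apply Hd.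
  - assert (Hd : 0 < c - s) by lra.
    exists (mkposreal _ Hd); intros y Hy Hyc. apply Hg.
    apply Rabs_lt_between' in Hy; simpl in Hy. lra.
  - apply closed_ge.
Qed.

Lemma continuous_affine (f : R -> R) (a b u : R) : continuous f u ->
  continuous (fun v => a * v + b * f v) u.
Proof.
  intros Hf. apply (continuous_plus (fun v => a * v) (fun v => b * f v)).
  - exact (continuous_scal_r a (fun v => v) u (continuous_id u)).
  - exact (continuous_scal_r b f u Hf).
Qed.

Lemma is_lim_continuous_comp (f g : R -> R) (x : Rbar) (l : R) :
  is_lim f x l -> continuous g l -> is_lim (fun t => g (f t)) x (g l).
Proof. intros Hf Hg. eapply filterlim_comp; eassumption. Qed.

Lemma is_lim_p_infty_of_eventually (f : R -> R) (l : R) :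
  (forall eps, 0 < eps -> exists T, forall t, T <= t -> Rabs (f t - l) <= eps) ->
  is_lim f p_infty l.
Proof.
  intros H. apply is_lim_spec. intros eps.
  destruct (H (eps / 2)) as [T HT]; [pose proof (cond_pos eps); lra|].
  exists T. intros t Ht. specialize (HT t ltac:(lra)). pose proof (cond_pos eps). lra.
Qed.

Lemma eventually_small_increments (f : R -> R) (T0 B : R) :
  (forall s t, T0 <= s <= t -> f s <= f t) -> (forall t, T0 <= t -> f t <= B) ->
  forall gam, 0 < gam -> exists T, T0 <= T /\ forall s t, T <= s <= t -> f t - f s < gam.
Proof.
  intros Hmono HB gam Hgam.
  set (E := fun z => exists t, T0 <= t /\ z = f t).
  destruct (completeness E) as [S [Hub Hlub]].
  { exists B. intros z [t [Ht ->]]. now apply HB. }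
  { exists (f T0), T0. split; [lra|reflexivity]. }
  assert (HT : exists T, T0 <= T /\ S - gam < f T).
  { apply NNPP. intros Hn. enough (S <= S - gam) by lra.
    apply Hlub. intros z [t [Ht ->]]. apply Rnot_lt_le. intros Hlt. apply Hn. now exists t. }
  destruct HT as [T [HT0 HT]]. exists T. split; [exact HT0|].
  intros s t Hst. assert (f t <= S) by (apply Hub; exists t; split; [lra|reflexivity]).
  pose proof (Hmono T s ltac:(lra)). lra.
Qed.

(** * Right derivatives *)

Definition right_deriv (f : R -> R) (u l : R) : Prop :=
  forall eps, 0 < eps -> exists delta, 0 < delta /\
    forall v, u < v < u + delta -> Rabs (f v - f u - l * (v - u)) <= eps * (v - u).

Lemma le_of_right_deriv_pos (g : R -> R) (s t : R) : s <= t ->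
  (forall u, s <= u <= t -> continuous g u) ->
  (forall u, s <= u < t -> exists l, right_deriv g u l /\ 0 < l) ->
  g s <= g t.
Proof.
  intros Hst Hc Hd.
  set (E := fun v => s <= v <= t /\ forall w, s <= w <= v -> g s <= g w).
  assert (Es : E s).
  { split; [lra|]. intros w Hw. replace w with s by lra. lra. }
  destruct (completeness E) as [c [Hub Hlub]].
  { exists t. intros v [Hv _]. lra. }
  { now exists s. }
  assert (Hsc : s <= c) by now apply Hub.
  assert (Hct : c <= t) by (apply Hlub; intros v [Hv _]; lra).
  assert (Hbelow : forall w, s <= w < c -> g s <= g w).
  { intros w Hw. destruct (classic (exists v, E v /\ w < v)) as [[v [[_ Hv] Hwv]]|Hn].
    - apply Hv; lra.
    - assert (c <= w) by (apply Hlub; intros v Ev; apply Rnot_lt_le; eauto).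
      lra. }
  assert (Hgc : g s <= g c).
  { destruct (Req_dec s c) as [<-|Hne]; [lra|].
    apply (continuous_ge_at_left g _ s); auto; lra. }
  assert (Ec : E c).
  { split; [lra|]. intros w Hw.
    destruct (Req_dec w c) as [->|]; [lra|]. apply Hbelow; lra. }
  destruct (Req_dec c t) as [<-|Hne]; [apply Ec; lra|].
  exfalso.
  destruct (Hd c ltac:(lra)) as [l [Hl Hlpos]].
  destruct (Hl (l / 2) ltac:(lra)) as [d [Hd0 Hv]].
  set (v0 := Rmin (c + d / 2) t).
  assert (Hv0 : c < v0 <= t) by (unfold v0; split; [apply Rmin_glb_lt|apply Rmin_r]; lra).
  assert (E v0).
  { split; [lra|]. intros w Hw. destruct (Rle_lt_dec w c); [apply Ec; lra|].
    assert (w < c + d) by (pose proof (Rmin_l (c + d / 2) t); unfold v0 in Hw; lra).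
    specialize (Hv w ltac:(lra)). apply Rabs_le_between in Hv. nra. }
  specialize (Hub v0 H). lra.
Qed.

Lemma right_deriv_affine (f : R -> R) (u l a b : R) : right_deriv f u l ->
  right_deriv (fun v => a * v + b * f v) u (a + b * l).
Proof.
  intros Hf eps Heps.
  destruct (Hf (eps / (Rabs b + 1))) as [d [Hd Hv]].
  { apply Rdiv_lt_0_compat; [lra|]. pose proof (Rabs_pos b); lra. }
  exists d; split; [exact Hd|]. intros v Huv.
  replace (a * v + b * f v - (a * u + b * f u) - (a + b * l) * (v - u))
    with (b * (f v - f u - l * (v - u))) by ring.
  rewrite Rabs_mult.
  pose proof (Rabs_pos b). pose proof (Rabs_pos (f v - f u - l * (v - u))).
  specialize (Hv v Huv).
  assert (Rabs b * (eps / (Rabs b + 1)) <= eps).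
  { apply (Rmult_le_reg_r (Rabs b + 1)); [lra|].
    replace (Rabs b * (eps / (Rabs b + 1)) * (Rabs b + 1)) with (Rabs b * eps) by (field; lra).
    nra. }
  assert (Rabs b * Rabs (f v - f u - l * (v - u)) <= Rabs b * (eps / (Rabs b + 1) * (v - u)))
    by (apply Rmult_le_compat_l; lra).
  nra.
Qed.

Lemma right_deriv_lower_bound (f : R -> R) (s t m : R) : s <= t ->
  (forall u, s <= u <= t -> continuous f u) ->
  (forall u, s <= u < t -> exists l, right_deriv f u l /\ m <= l) ->
  m * (t - s) <= f t - f s.
Proof.
  intros Hst Hc Hd.
  assert (H : forall eps, 0 < eps -> m * (t - s) <= f t - f s + eps * (t - s)).
  { intros eps Heps.
    enough ((eps - m) * s + 1 * f s <= (eps - m) * t + 1 * f t) by lra.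
    apply (le_of_right_deriv_pos (fun v => (eps - m) * v + 1 * f v)); [exact Hst| |].
    - intros u Hu. now apply continuous_affine, Hc.
    - intros u Hu. destruct (Hd u Hu) as [l [Hl Hml]].
      exists (eps - m + 1 * l). split; [now apply right_deriv_affine|lra]. }
  destruct (Req_dec s t) as [<-|Hne]; [lra|].
  apply Rle_plus_epsilon. intros eps Heps.
  specialize (H (eps / (t - s)) ltac:(apply Rdiv_lt_0_compat; lra)).
  replace (eps / (t - s) * (t - s)) with eps in H by (field; lra). exact H.
Qed.

Lemma right_deriv_upper_bound (f : R -> R) (s t m : R) : s <= t ->
  (forall u, s <= u <= t -> continuous f u) ->
  (forall u, s <= u < t -> exists l, right_deriv f u l /\ l <= m) ->
  f t - f s <= m * (t - s).
Proof.
  intros Hst Hc Hd.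
  enough (- m * (t - s) <= (0 * t + -1 * f t) - (0 * s + -1 * f s)) by lra.
  apply (right_deriv_lower_bound (fun v => 0 * v + -1 * f v)); [exact Hst| |].
  - intros u Hu. now apply continuous_affine, Hc.
  - intros u Hu. destruct (Hd u Hu) as [l [Hl Hlm]].
    exists (0 + -1 * l). split; [now apply right_deriv_affine|lra].
Qed.

Lemma right_deriv_increment_bound (f : R -> R) (s t c B : R) : s <= t ->
  (forall u, s <= u <= t -> continuous f u) ->
  (forall u, s <= u < t -> exists l, right_deriv f u l /\ Rabs (l - c) <= B) ->
  Rabs (f t - f s - c * (t - s)) <= B * (t - s).
Proof.
  intros Hst Hc Hd.
  set (g := fun v => - c * v + 1 * f v).
  assert (Hg : forall u, s <= u <= t -> continuous g u) by (intros; now apply continuous_affine, Hc).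
  assert (Hdg : forall u, s <= u < t -> exists l, right_deriv g u l /\ Rabs l <= B).
  { intros u Hu. destruct (Hd u Hu) as [l [Hl HB]].
    exists (- c + 1 * l). split; [now apply right_deriv_affine|].
    replace (- c + 1 * l) with (l - c) by ring. exact HB. }
  replace (f t - f s - c * (t - s)) with (g t - g s) by (unfold g; ring).
  apply Rabs_le_between. split.
  - enough (- B * (t - s) <= g t - g s) by lra.
    apply right_deriv_lower_bound; [exact Hst|exact Hg|].
    intros u Hu. destruct (Hdg u Hu) as [l [Hl HB]]. exists l.
    apply Rabs_le_between in HB. split; [exact Hl|lra].
  - apply right_deriv_upper_bound; [exact Hst|exact Hg|].
    intros u Hu. destruct (Hdg u Hu) as [l [Hl HB]]. exists l.
    apply Rabs_le_between in HB. split; [exact Hl|lra].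
Qed.

Lemma right_deriv_of_is_derive (f g : R -> R) (u l : R) : is_derive f u l ->
  (forall v, u <= v -> f v = g v) -> right_deriv g u l.
Proof.
  intros Hf Hfg. apply is_derive_Reals in Hf.
  intros eps Heps. destruct (Hf eps Heps) as [d Hd]. exists d. split; [apply cond_pos|].
  intros v Hv. specialize (Hd (v - u) ltac:(lra) ltac:(rewrite Rabs_pos_eq; lra)).
  replace (u + (v - u)) with v in Hd by ring.
  rewrite <- !Hfg by lra.
  replace (f v - f u - l * (v - u)) with (((f v - f u) / (v - u) - l) * (v - u)) by (field; lra).
  rewrite Rabs_mult, (Rabs_pos_eq (v - u)) by lra. nra.
Qed.

(* Continuing [f] to the left of [u] by a line of slope [w] turns a right derivative [w]
   at [u] into a derivative, so that the usual rules for [is_derive] apply. *)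
Definition right_extension (f : R -> R) (u w v : R) : R :=
  if Rle_dec u v then f v else f u + w * (v - u).

Lemma right_extension_eq (f : R -> R) (u w v : R) : u <= v -> right_extension f u w v = f v.
Proof. intros H. unfold right_extension. destruct (Rle_dec u v); [reflexivity|lra]. Qed.

Lemma is_derive_right_extension (f : R -> R) (u w : R) : right_deriv f u w ->
  is_derive (right_extension f u w) u w.
Proof.
  intros Hf. apply is_derive_Reals. intros eps Heps.
  destruct (Hf (eps / 2) ltac:(lra)) as [d [Hd Hv]].
  exists (mkposreal d Hd). intros h Hh0 Hh. simpl in Hh.
  unfold right_extension. destruct (Rle_dec u u) as [_|]; [|lra].
  destruct (Rle_dec u (u + h)) as [Hle|Hlt].
  - assert (Hh1 : 0 < h) by (destruct (Rle_lt_or_eq _ _ Hle); [lra|exfalso; apply Hh0; lra]).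
    specialize (Hv (u + h) ltac:(apply Rabs_lt_between in Hh; lra)).
    replace (u + h - u) with h in Hv by ring.
    replace ((f (u + h) - f u) / h - w) with ((f (u + h) - f u - w * h) / h) by (field; lra).
    unfold Rdiv. rewrite Rabs_mult, Rabs_inv, (Rabs_pos_eq h) by lra.
    apply (Rmult_lt_reg_r h); [lra|]. rewrite Rmult_assoc, Rinv_l by lra. nra.
  - replace ((f u + w * (u + h - u) - f u) / h - w) with 0 by (field; auto).
    rewrite Rabs_R0. exact Heps.
Qed.

Lemma right_deriv_of_RInt (f g : R -> R) (u w : R) :
  (forall v, u < v -> ex_RInt g u v /\ f v - f u = RInt g u v) ->
  (forall eps, 0 < eps -> exists d, 0 < d /\ forall z, u < z < u + d -> Rabs (g z - w) <= eps) ->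
  right_deriv f u w.
Proof.
  intros Hint Hg eps Heps. destruct (Hg eps Heps) as [d [Hd Hz]]. exists d; split; [exact Hd|].
  intros v Hv. destruct (Hint v ltac:(lra)) as [Hex ->].
  assert (H1 : RInt g u v <= RInt (fun _ => w + eps) u v).
  { apply RInt_le; [lra|exact Hex|apply ex_RInt_const|].
    intros z Hz'. specialize (Hz z ltac:(lra)). apply Rabs_le_between in Hz. lra. }
  assert (H2 : RInt (fun _ => w - eps) u v <= RInt g u v).
  { apply RInt_le; [lra|apply ex_RInt_const|exact Hex|].
    intros z Hz'. specialize (Hz z ltac:(lra)). apply Rabs_le_between in Hz. lra. }
  rewrite !RInt_const in H1, H2. change (scal ?a ?b) with (a * b) in H1, H2.
  apply Rabs_le_between. nra.
Qed.

Lemma abs_sqrt_sub_le (a b : R) : 0 <= a -> 0 <= b -> Rabs (sqrt a - sqrt b) <= sqrt (Rabs (a - b)).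
Proof.
  assert (Hle : forall a b, 0 <= b <= a -> sqrt a - sqrt b <= sqrt (a - b)).
  { intros a0 b0 Hab.
    pose proof (sqrt_pos b0). pose proof (sqrt_pos (a0 - b0)).
    enough (sqrt a0 <= sqrt b0 + sqrt (a0 - b0)) by lra.
    rewrite <- (sqrt_pow2 (sqrt b0 + sqrt (a0 - b0))) by lra. apply sqrt_le_1; [lra|nra|].
    replace ((sqrt b0 + sqrt (a0 - b0)) ^ 2)
      with (sqrt b0 ^ 2 + sqrt (a0 - b0) ^ 2 + 2 * sqrt b0 * sqrt (a0 - b0)) by ring.
    rewrite !pow2_sqrt by lra. nra. }
  intros Ha Hb. destruct (Rle_dec b a).
  - assert (sqrt b <= sqrt a) by (apply sqrt_le_1; lra).
    rewrite !Rabs_pos_eq by lra. apply Hle; lra.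
  - assert (sqrt a <= sqrt b) by (apply sqrt_le_1; lra).
    rewrite Rabs_minus_sym, (Rabs_minus_sym a), !Rabs_pos_eq by lra. apply Hle; lra.
Qed.

Lemma le_one_add_of_sq_le (c b e r : R) : 0 < c -> 0 <= b -> 0 <= e -> 0 <= r ->
  c * r ^ 2 <= b * r + e -> r <= 1 + (b + e) / c.
Proof.
  intros Hc Hb He Hr H.
  assert (0 <= (b + e) / c) by (apply Rdiv_le_0_compat; lra).
  destruct (Rle_dec r 1) as [|Hr1]; [lra|].
  enough (r <= (b + e) / c) by lra.
  apply (Rmult_le_reg_l c); [exact Hc|].
  replace (c * ((b + e) / c)) with (b + e) by (field; lra).
  apply (Rmult_le_reg_l r); [lra|]. nra.
Qed.

Lemma right_triangle_estimate (r s a q q' : R) : 0 < r -> 0 <= s <= r -> r ^ 2 = a ^ 2 + s ^ 2 ->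
  Rabs (q - q') <= Rabs a -> 0 <= q' <= s -> Rabs (s * q / r - q') <= 2 * Rabs a.
Proof.
  intros Hr Hs Hrs Hq Hq'.
  assert (Hsr : 0 <= s / r <= 1).
  { split; [apply Rdiv_le_0_compat; lra|].
    apply (Rmult_le_reg_r r); [exact Hr|]. unfold Rdiv; rewrite Rmult_assoc, Rinv_l by lra; lra. }
  assert (Hgap : r - s <= Rabs a).
  { assert (Rabs a ^ 2 = a ^ 2) by apply pow2_abs.
    pose proof (Rabs_pos a). nra. }
  replace (s * q / r - q') with (s / r * (q - q') + (s / r - 1) * q') by (field; lra).
  eapply Rle_trans; [apply Rabs_triang|].
  rewrite !Rabs_mult, (Rabs_pos_eq (s / r)), (Rabs_left1 (s / r - 1)), (Rabs_pos_eq q') by lra.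
  assert (s / r * Rabs (q - q') <= Rabs a) by (pose proof (Rabs_pos (q - q')); nra).
  assert (- (s / r - 1) * q' <= r - s).
  { replace (- (s / r - 1)) with ((r - s) / r) by (field; lra).
    assert (0 <= (r - s) / r <= 1).
    { split; [apply Rdiv_le_0_compat; lra|].
      apply (Rmult_le_reg_r r); [exact Hr|]. unfold Rdiv; rewrite Rmult_assoc, Rinv_l by lra; lra. }
    nra. }
  lra.
Qed.

(** * Tangent lengths *)

Definition pos_part (z : R) : R := (z + Rabs z) / 2.

Lemma pos_part_nonneg (z : R) : 0 <= pos_part z.
Proof. unfold pos_part. pose proof (Rle_abs (- z)). rewrite Rabs_Ropp in H. lra. Qed.

Lemma pos_part_of_ge (z : R) : 0 <= z -> pos_part z = z.
Proof. intros H. unfold pos_part. rewrite Rabs_pos_eq by lra. lra. Qed.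

Lemma pos_part_of_le (z : R) : z <= 0 -> pos_part z = 0.
Proof. intros H. unfold pos_part. rewrite Rabs_left1 by lra. lra. Qed.

Lemma abs_pos_part_sub_le (u v : R) : Rabs (pos_part u - pos_part v) <= Rabs (u - v).
Proof.
  unfold pos_part. pose proof (Rabs_triang_inv2 u v).
  replace ((u + Rabs u) / 2 - (v + Rabs v) / 2) with ((u - v) / 2 + (Rabs u - Rabs v) / 2) by field.
  eapply Rle_trans; [apply Rabs_triang|].
  unfold Rdiv. rewrite !Rabs_mult, (Rabs_pos_eq (/ 2)) by lra. lra.
Qed.

Lemma continuous_pos_part (z : R) : continuous pos_part z.
Proof.
  apply (continuous_scal_l (fun z => z + Rabs z) (/ 2)).
  apply (continuous_plus (fun z => z) Rabs); [apply continuous_id|apply continuous_Rabs].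
Qed.

(* The length of a tangent segment from a point at squared distance [z] from the centre of
   the circle of radius [a] (zero inside the circle). *)
Definition tangent_length (a z : R) : R := sqrt (pos_part (z - a ^ 2)).

Lemma tangent_length_of_ge (a z : R) : a ^ 2 <= z -> tangent_length a z = sqrt (z - a ^ 2).
Proof. intros H. unfold tangent_length. rewrite pos_part_of_ge by lra. reflexivity. Qed.

Lemma tangent_length_of_le (a z : R) : z <= a ^ 2 -> tangent_length a z = 0.
Proof. intros H. unfold tangent_length. rewrite pos_part_of_le by lra. apply sqrt_0. Qed.

Lemma tangent_length_nonneg (a z : R) : 0 <= tangent_length a z.
Proof. apply sqrt_pos. Qed.

Lemma tangent_length_le_sqrt (a z : R) : 0 <= z -> tangent_length a z <= sqrt z.
Proof.
  intros Hz. destruct (Rle_dec (a ^ 2) z) as [Hle|Hgt].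
  - rewrite tangent_length_of_ge by exact Hle. apply sqrt_le_1; pose proof (pow2_ge_0 a); lra.
  - rewrite tangent_length_of_le by lra. apply sqrt_pos.
Qed.

Lemma tangent_length_sq (a z : R) : tangent_length a z ^ 2 = pos_part (z - a ^ 2).
Proof. apply pow2_sqrt, pos_part_nonneg. Qed.

Lemma continuous_tangent_length (a z : R) : continuous (tangent_length a) z.
Proof.
  apply continuous_sqrt_comp.
  apply (continuous_comp (fun z => z - a ^ 2) pos_part); [|apply continuous_pos_part].
  apply (continuous_minus (fun z => z) (fun _ => a ^ 2)); [apply continuous_id|apply continuous_const].
Qed.

Lemma abs_tangent_length_sub_le (a z1 z2 : R) :
  Rabs (tangent_length a z1 - tangent_length a z2) <= sqrt (Rabs (z1 - z2)).
Proof.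
  eapply Rle_trans; [apply abs_sqrt_sub_le; apply pos_part_nonneg|].
  apply sqrt_le_1_alt. eapply Rle_trans; [apply abs_pos_part_sub_le|].
  right. f_equal. ring.
Qed.

Definition signed_tangent (a d : R) : R :=
  if Rle_dec 0 d then tangent_length a (d ^ 2) else - tangent_length a (d ^ 2).

Lemma signed_tangent_of_le (a d : R) : d ^ 2 <= a ^ 2 -> signed_tangent a d = 0.
Proof.
  intros H. unfold signed_tangent. rewrite tangent_length_of_le by exact H.
  destruct (Rle_dec 0 d); lra.
Qed.

Lemma abs_signed_tangent_sub_le (a d1 d2 : R) : Rabs (d1 - d2) <= a ->
  Rabs (signed_tangent a d1 - signed_tangent a d2) <= sqrt (Rabs (d1 ^ 2 - d2 ^ 2)).
Proof.
  intros H. apply Rabs_le_between in H.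
  assert (Hopp : forall u v, Rabs (- u - - v) = Rabs (u - v))
    by (intros; rewrite <- Rabs_Ropp; f_equal; ring).
  unfold signed_tangent.
  destruct (Rle_dec 0 d1), (Rle_dec 0 d2);
    [apply abs_tangent_length_sub_le| | |rewrite Hopp; apply abs_tangent_length_sub_le];
    rewrite !tangent_length_of_le by nra; rewrite Ropp_0, Rminus_0_r, Rabs_R0; apply sqrt_pos.
Qed.

Lemma eq_sqrt_of_signed_tangent_pos (a d : R) : 0 < signed_tangent a d ->
  d = sqrt (signed_tangent a d ^ 2 + a ^ 2).
Proof.
  unfold signed_tangent. intros H. destruct (Rle_dec 0 d) as [Hd|Hd].
  - rewrite tangent_length_sq. destruct (Rle_dec (a ^ 2) (d ^ 2)).
    + rewrite pos_part_of_ge by lra. replace (d ^ 2 - a ^ 2 + a ^ 2) with (d ^ 2) by ring.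
      now rewrite sqrt_pow2.
    + rewrite tangent_length_of_le in H by lra. lra.
  - pose proof (tangent_length_nonneg a (d ^ 2)). lra.
Qed.

(** * The potential *)

Section Potential.

Variable a : R.
Hypothesis a_pos : 0 < a.

Definition potential_density (z : R) : R :=
  tangent_length a z / (2 * sqrt (tangent_length a z ^ 2 + a ^ 2)).

Definition potential (z : R) : R := RInt potential_density (a ^ 2) z.

Let density_denom_pos (z : R) : 0 < sqrt (tangent_length a z ^ 2 + a ^ 2).
Proof. apply sqrt_lt_R0. pose proof (pow2_ge_0 (tangent_length a z)). nra. Qed.

Lemma continuous_potential_density (z : R) : continuous potential_density z.
Proof.
  pose proof (density_denom_pos z).
  apply (continuous_mult (K := R_AbsRing) (tangent_length a)); [apply continuous_tangent_length|].
  apply continuous_Rinv_comp; [|lra].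
  apply (continuous_scal_r 2 (fun z => sqrt (tangent_length a z ^ 2 + a ^ 2))).
  apply continuous_sqrt_comp.
  apply (continuous_plus (fun z => tangent_length a z ^ 2)); [|apply continuous_const].
  apply (continuous_comp (tangent_length a) (fun u => u ^ 2)); [apply continuous_tangent_length|].
  apply (ex_derive_continuous (fun u => u ^ 2)). auto_derive. exact I.
Qed.

Lemma ex_RInt_potential_density (u v : R) : ex_RInt potential_density u v.
Proof.
  apply (ex_RInt_continuous (V := R_CompleteNormedModule)). intros z _.
  apply continuous_potential_density.
Qed.

Lemma is_derive_potential (z : R) : is_derive potential z (potential_density z).
Proof.
  apply is_derive_RInt with (a := a ^ 2).
  - apply filter_forall. intros b. apply (RInt_correct (V := R_CompleteNormedModule)).
    apply ex_RInt_potential_density.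
  - apply continuous_potential_density.
Qed.

Lemma potential_density_nonneg (z : R) : 0 <= potential_density z.
Proof.
  pose proof (density_denom_pos z).
  apply Rdiv_le_0_compat; [apply tangent_length_nonneg|lra].
Qed.

Lemma potential_density_of_le (z : R) : z <= a ^ 2 -> potential_density z = 0.
Proof. intros H. unfold potential_density. rewrite tangent_length_of_le by exact H. lra. Qed.

Lemma two_potential_density (z : R) : 0 <= z ->
  2 * potential_density z = tangent_length a z / sqrt z.
Proof.
  intros Hz. destruct (Rle_dec (a ^ 2) z).
  - unfold potential_density. rewrite tangent_length_sq, pos_part_of_ge by lra.
    replace (z - a ^ 2 + a ^ 2) with z by ring.
    assert (0 < sqrt z) by (apply sqrt_lt_R0; nra). field. lra.
  - rewrite potential_density_of_le by lra. rewrite tangent_length_of_le by lra. lra.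
Qed.

Lemma potential_density_ge_third (z : R) : 2 * a ^ 2 <= z -> 1 / 3 <= potential_density z.
Proof.
  intros Hz. pose proof (two_potential_density z ltac:(nra)) as Hd.
  rewrite tangent_length_of_ge in Hd by nra.
  assert (Hs : 0 < sqrt z) by (apply sqrt_lt_R0; nra).
  assert (H2 : 2 * sqrt z <= 3 * sqrt (z - a ^ 2)).
  { rewrite <- (sqrt_pow2 2), <- (sqrt_pow2 3) by lra. rewrite <- !sqrt_mult by nra.
    apply sqrt_le_1; nra. }
  assert (Hpd : potential_density z * (2 * sqrt z) = sqrt (z - a ^ 2)).
  { replace (potential_density z * (2 * sqrt z)) with (2 * potential_density z * sqrt z) by ring.
    rewrite Hd. field. lra. }
  apply (Rmult_le_reg_r (2 * sqrt z)); [lra|]. lra.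
Qed.

Lemma potential_nonneg (z : R) : 0 <= potential z.
Proof.
  unfold potential. destruct (Rle_dec (a ^ 2) z) as [Hle|Hgt].
  - apply RInt_ge_0; [exact Hle|apply ex_RInt_potential_density|intros; apply potential_density_nonneg].
  - rewrite <- opp_RInt_swap by apply ex_RInt_potential_density.
    rewrite (RInt_ext _ (fun _ => 0)), RInt_const.
    + change (0 <= - ((a ^ 2 - z) * 0)). lra.
    + intros u Hu. apply potential_density_of_le.
      rewrite Rmin_left, Rmax_right in Hu by lra. lra.
Qed.

Lemma potential_ge (z : R) : 2 * a ^ 2 <= z -> (z - 2 * a ^ 2) / 3 <= potential z.
Proof.
  intros Hz. unfold potential.
  rewrite <- (RInt_Chasles potential_density (a ^ 2) (2 * a ^ 2) z)
    by apply ex_RInt_potential_density.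
  change (plus ?u ?v) with (u + v).
  assert (0 <= RInt potential_density (a ^ 2) (2 * a ^ 2)).
  { apply RInt_ge_0; [nra|apply ex_RInt_potential_density|intros; apply potential_density_nonneg]. }
  assert (RInt (fun _ => 1 / 3) (2 * a ^ 2) z <= RInt potential_density (2 * a ^ 2) z).
  { apply RInt_le; [exact Hz|apply ex_RInt_const|apply ex_RInt_potential_density|].
    intros u Hu. apply potential_density_ge_third. lra. }
  rewrite RInt_const in H0. change (scal ?u ?v) with (u * v) in H0. lra.
Qed.

End Potential.

(** * The guidance law *)

Section Guidance.

Variables xT yT V rd k : R.
Variables x y psi : R -> R.
Hypothesis V_pos : 0 < V.
Hypothesis rd_pos : 0 < rd.
Hypothesis k_gt : 1 / rd < k.
Hypothesis is_derive_x : forall t, 0 < t -> is_derive x t (V * cos (psi t)).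
Hypothesis is_derive_y : forall t, 0 < t -> is_derive y t (V * sin (psi t)).

Definition distance (t : R) : R := dist_to_target xT yT (x t) (y t).

Definition turn_rate (t : R) : R := control V k rd (distance t) (Derive distance t).

Hypothesis psi_RInt : forall t, 0 <= t -> is_RInt turn_rate 0 t (psi t - psi 0).

Definition ra : R := sqrt (rd ^ 2 - 1 / k ^ 2).

Definition sqdist (t : R) : R := (xT - x t) ^ 2 + (yT - y t) ^ 2.

(* For a heading [p], [rcos_along p t = r cos theta] and [rsin_along p t = r sin theta] are
   the components of the line of sight along and across the heading. *)
Definition rcos_along (p : R -> R) (t : R) : R := (xT - x t) * cos (p t) + (yT - y t) * sin (p t).
Definition rsin_along (p : R -> R) (t : R) : R := (xT - x t) * sin (p t) - (yT - y t) * cos (p t).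

Definition rcos : R -> R := rcos_along psi.
Definition rsin : R -> R := rsin_along psi.

(* The control law on [ra <= r], after substituting [rdot = - V rcos / r] and
   [cos (PI - asin (ra / r)) = - tangent_length ra (r ^ 2) / r]. *)
Definition outer_rate (t : R) : R := k * V * (rcos t - tangent_length ra (sqdist t)) / distance t.

Lemma k_pos : 0 < k.
Proof. assert (0 < 1 / rd) by (apply Rdiv_lt_0_compat; lra). lra. Qed.

Lemma kV_pos : 0 < k * V.
Proof. pose proof k_pos. nra. Qed.

Lemma inv_k_sq_lt : 1 / k ^ 2 < rd ^ 2.
Proof.
  pose proof k_pos.
  assert (1 < k * rd).
  { apply (Rmult_lt_compat_r rd) in k_gt; [|exact rd_pos].
    unfold Rdiv in k_gt. rewrite Rmult_assoc, Rinv_l, Rmult_1_r in k_gt; lra. }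
  apply (Rmult_lt_reg_r (k ^ 2)); [nra|].
  unfold Rdiv. rewrite Rmult_assoc, Rinv_l by nra. nra.
Qed.

Lemma ra_sq : ra ^ 2 = rd ^ 2 - 1 / k ^ 2.
Proof. unfold ra. rewrite pow2_sqrt; [reflexivity|]. pose proof inv_k_sq_lt. lra. Qed.

Lemma ra_pos : 0 < ra.
Proof. unfold ra. apply sqrt_lt_R0. pose proof inv_k_sq_lt. lra. Qed.

Lemma sqdist_eq (t : R) : sqdist t = rcos t ^ 2 + rsin t ^ 2.
Proof.
  unfold sqdist, rcos, rsin, rcos_along, rsin_along.
  pose proof (sin2_cos2 (psi t)) as H. unfold Rsqr in H.
  transitivity (((xT - x t) ^ 2 + (yT - y t) ^ 2) * (sin (psi t) * sin (psi t) + cos (psi t) * cos (psi t)));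
    [rewrite H|]; ring.
Qed.

Lemma sqdist_nonneg (t : R) : 0 <= sqdist t.
Proof. unfold sqdist. pose proof (pow2_ge_0 (xT - x t)). pose proof (pow2_ge_0 (yT - y t)). lra. Qed.

Lemma distance_nonneg (t : R) : 0 <= distance t.
Proof. apply sqrt_pos. Qed.

Lemma distance_sq (t : R) : distance t ^ 2 = sqdist t.
Proof. apply pow2_sqrt, sqdist_nonneg. Qed.

Lemma abs_rcos_le (t : R) : Rabs (rcos t) <= distance t.
Proof.
  rewrite <- (Rabs_pos_eq (distance t)) by apply distance_nonneg.
  apply Rsqr_le_abs_0. unfold Rsqr. pose proof (distance_sq t). rewrite sqdist_eq in H.
  pose proof (pow2_ge_0 (rsin t)). simpl in *. lra.
Qed.

Lemma abs_rsin_le (t : R) : Rabs (rsin t) <= distance t.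
Proof.
  rewrite <- (Rabs_pos_eq (distance t)) by apply distance_nonneg.
  apply Rsqr_le_abs_0. unfold Rsqr. pose proof (distance_sq t). rewrite sqdist_eq in H.
  pose proof (pow2_ge_0 (rcos t)). simpl in *. lra.
Qed.

Lemma is_derive_sqdist (t : R) : 0 < t -> is_derive sqdist t (-2 * V * rcos t).
Proof.
  intros Ht. unfold sqdist. auto_derive.
  - repeat split; [exists (V * cos (psi t))|exists (V * sin (psi t))]; auto.
  - replace (Derive (fun u => x u) t) with (V * cos (psi t))
      by (symmetry; apply is_derive_unique; auto).
    replace (Derive (fun u => y u) t) with (V * sin (psi t))
      by (symmetry; apply is_derive_unique; auto).
    unfold rcos, rcos_along. ring.
Qed.

Lemma is_derive_distance (t : R) : 0 < t -> 0 < distance t ->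
  is_derive distance t (- V * rcos t / distance t).
Proof.
  intros Ht Hr.
  assert (Hsq : 0 < sqdist t) by (rewrite <- distance_sq; nra).
  replace (- V * rcos t / distance t) with (-2 * V * rcos t / (2 * sqrt (sqdist t)))
    by (change (sqrt (sqdist t)) with (distance t); field; lra).
  apply (is_derive_sqrt sqdist); [now apply is_derive_sqdist|exact Hsq].
Qed.

Lemma turn_rate_of_ge (t : R) : 0 < t -> ra <= distance t -> turn_rate t = outer_rate t.
Proof.
  intros Ht Hra. pose proof ra_pos.
  assert (Hr : 0 < distance t) by lra.
  assert (Hsq : ra ^ 2 <= sqdist t) by (rewrite <- distance_sq; nra).
  unfold turn_rate, control. cbv zeta. fold ra.
  destruct (Rle_dec ra (distance t)) as [_|]; [|lra].
  rewrite (is_derive_unique _ _ _ (is_derive_distance t Ht Hr)).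
  rewrite Rtrigo_facts.cos_pi_minus, cos_asin.
  2: { split; [apply (Rle_trans _ 0); [lra|apply Rdiv_le_0_compat; lra]|].
       apply (Rmult_le_reg_r (distance t)); [exact Hr|].
       unfold Rdiv; rewrite Rmult_assoc, Rinv_l by lra; lra. }
  replace (sqrt (1 - (ra / distance t)²)) with (tangent_length ra (sqdist t) / distance t).
  - unfold outer_rate. field. lra.
  - pose proof (tangent_length_nonneg ra (sqdist t)).
    symmetry. apply sqrt_lem_1; [|apply Rdiv_le_0_compat; lra|].
    + enough ((ra / distance t)² <= 1) by lra. unfold Rsqr.
      replace (ra / distance t * (ra / distance t)) with (ra ^ 2 / distance t ^ 2) by (field; lra).
      apply (Rmult_le_reg_r (distance t ^ 2)); [nra|].
      unfold Rdiv; rewrite Rmult_assoc, Rinv_l by nra. rewrite distance_sq. lra.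
    + replace (tangent_length ra (sqdist t) / distance t * (tangent_length ra (sqdist t) / distance t))
        with (tangent_length ra (sqdist t) ^ 2 / distance t ^ 2) by (field; lra).
      rewrite tangent_length_sq, pos_part_of_ge, <- distance_sq by lra.
      unfold Rsqr. field. lra.
Qed.

Lemma turn_rate_of_lt (t : R) : distance t < ra -> turn_rate t = 0.
Proof.
  intros H. unfold turn_rate, control. cbv zeta. fold ra.
  destruct (Rle_dec ra (distance t)); [lra|reflexivity].
Qed.

Lemma abs_outer_rate_le (t : R) : Rabs (outer_rate t) <= 2 * k * V.
Proof.
  pose proof kV_pos. unfold outer_rate.
  destruct (Req_dec (distance t) 0) as [H0|H0].
  { rewrite H0. unfold Rdiv. rewrite Rinv_0, Rmult_0_r, Rabs_R0. lra. }
  assert (Hr : 0 < distance t) by (pose proof (distance_nonneg t); lra).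
  pose proof (abs_rcos_le t) as HA. apply Rabs_le_between in HA.
  pose proof (tangent_length_nonneg ra (sqdist t)).
  pose proof (tangent_length_le_sqrt ra (sqdist t) (sqdist_nonneg t)).
  change (sqrt (sqdist t)) with (distance t) in H2.
  unfold Rdiv. rewrite !Rabs_mult, Rabs_inv, (Rabs_pos_eq (distance t)), (Rabs_pos_eq k), (Rabs_pos_eq V)
    by (pose proof k_pos; lra).
  apply (Rmult_le_reg_r (distance t)); [exact Hr|].
  rewrite Rmult_assoc, Rinv_l, Rmult_1_r by lra.
  assert (Rabs (rcos t - tangent_length ra (sqdist t)) <= 2 * distance t)
    by (apply Rabs_le_between; lra).
  nra.
Qed.

Lemma abs_turn_rate_le (t : R) : 0 < t -> Rabs (turn_rate t) <= 2 * k * V.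
Proof.
  intros Ht. destruct (Rle_dec ra (distance t)).
  - rewrite turn_rate_of_ge by assumption. apply abs_outer_rate_le.
  - rewrite turn_rate_of_lt by lra. rewrite Rabs_R0. pose proof kV_pos. lra.
Qed.

Lemma psi_sub_RInt (u v : R) : 0 <= u <= v -> ex_RInt turn_rate u v /\ psi v - psi u = RInt turn_rate u v.
Proof.
  intros Huv.
  pose proof (psi_RInt v ltac:(lra)) as Hv. pose proof (psi_RInt u ltac:(lra)) as Hu.
  assert (Euv : ex_RInt turn_rate u v)
    by (apply (ex_RInt_Chasles_2 turn_rate 0); [lra|eexists; exact Hv]).
  split; [exact Euv|].
  pose proof (RInt_Chasles turn_rate 0 u v ltac:(eexists; exact Hu) Euv) as H.
  rewrite (is_RInt_unique _ _ _ _ Hv), (is_RInt_unique _ _ _ _ Hu) in H.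
  change (plus ?a ?b) with (a + b) in H. lra.
Qed.

Lemma abs_psi_sub_le (u v : R) : 0 < u <= v -> Rabs (psi v - psi u) <= 2 * k * V * (v - u).
Proof.
  intros Huv. destruct (psi_sub_RInt u v ltac:(lra)) as [E ->].
  rewrite Rmult_comm. apply abs_RInt_le_const; [lra|exact E|].
  intros t Ht. apply abs_turn_rate_le. lra.
Qed.

Lemma continuous_psi (t : R) : 0 < t -> continuous psi t.
Proof.
  intros Ht. apply filterlim_locally. intros eps.
  pose proof kV_pos.
  assert (Hd : 0 < Rmin (t / 2) (eps / (2 * k * V + 1)))
    by (apply Rmin_glb_lt; [lra|apply Rdiv_lt_0_compat; [apply cond_pos|lra]]).
  exists (mkposreal _ Hd). intros z Hz. change (Rabs (psi z - psi t) < eps).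
  change (Rabs (z - t) < Rmin (t / 2) (eps / (2 * k * V + 1))) in Hz.
  pose proof (Rmin_l (t / 2) (eps / (2 * k * V + 1))).
  pose proof (Rmin_r (t / 2) (eps / (2 * k * V + 1))).
  assert (Hb : Rabs (psi z - psi t) <= 2 * k * V * Rabs (z - t)).
  { apply Rabs_lt_between in Hz. destruct (Rle_dec t z).
    - rewrite (Rabs_pos_eq (z - t)) by lra. apply abs_psi_sub_le. lra.
    - rewrite Rabs_minus_sym, (Rabs_minus_sym z), (Rabs_pos_eq (t - z)) by lra.
      apply abs_psi_sub_le. lra. }
  assert (2 * k * V * (eps / (2 * k * V + 1)) < eps).
  { apply (Rmult_lt_reg_r (2 * k * V + 1)); [lra|].
    replace (2 * k * V * (eps / (2 * k * V + 1)) * (2 * k * V + 1)) with (2 * k * V * eps)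
      by (field; lra).
    pose proof (cond_pos eps). nra. }
  pose proof (Rabs_pos (z - t)). nra.
Qed.

Lemma continuous_x (t : R) : 0 < t -> continuous x t.
Proof. intros Ht. apply (ex_derive_continuous x). eexists. now apply is_derive_x. Qed.

Lemma continuous_y (t : R) : 0 < t -> continuous y t.
Proof. intros Ht. apply (ex_derive_continuous y). eexists. now apply is_derive_y. Qed.

Lemma continuous_rcos (t : R) : 0 < t -> continuous rcos t.
Proof.
  intros Ht. unfold rcos, rcos_along.
  apply (continuous_plus (fun t => (xT - x t) * cos (psi t)) (fun t => (yT - y t) * sin (psi t))).
  - apply (continuous_mult (K := R_AbsRing) (fun t => xT - x t) (fun t => cos (psi t))).
    + apply (continuous_minus (fun _ => xT) x); [apply continuous_const|now apply continuous_x].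
    + now apply continuous_cos_comp, continuous_psi.
  - apply (continuous_mult (K := R_AbsRing) (fun t => yT - y t) (fun t => sin (psi t))).
    + apply (continuous_minus (fun _ => yT) y); [apply continuous_const|now apply continuous_y].
    + now apply continuous_sin_comp, continuous_psi.
Qed.

Lemma continuous_rsin (t : R) : 0 < t -> continuous rsin t.
Proof.
  intros Ht. unfold rsin, rsin_along.
  apply (continuous_minus (fun t => (xT - x t) * sin (psi t)) (fun t => (yT - y t) * cos (psi t))).
  - apply (continuous_mult (K := R_AbsRing) (fun t => xT - x t) (fun t => sin (psi t))).
    + apply (continuous_minus (fun _ => xT) x); [apply continuous_const|now apply continuous_x].
    + now apply continuous_sin_comp, continuous_psi.
  - apply (continuous_mult (K := R_AbsRing) (fun t => yT - y t) (fun t => cos (psi t))).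
    + apply (continuous_minus (fun _ => yT) y); [apply continuous_const|now apply continuous_y].
    + now apply continuous_cos_comp, continuous_psi.
Qed.

Lemma continuous_sqdist (t : R) : 0 < t -> continuous sqdist t.
Proof. intros Ht. apply (ex_derive_continuous sqdist). eexists. now apply is_derive_sqdist. Qed.

Lemma continuous_distance (t : R) : 0 < t -> continuous distance t.
Proof. intros Ht. now apply continuous_sqrt_comp, continuous_sqdist. Qed.

Lemma continuous_outer_rate (t : R) : 0 < t -> 0 < distance t -> continuous outer_rate t.
Proof.
  intros Ht Hr. unfold outer_rate.
  apply (continuous_mult (K := R_AbsRing) (fun t => k * V * (rcos t - tangent_length ra (sqdist t)))).
  - apply (continuous_scal_r (k * V) (fun t => rcos t - tangent_length ra (sqdist t))).
    apply (continuous_minus rcos (fun t => tangent_length ra (sqdist t))); [now apply continuous_rcos|].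
    apply (continuous_comp sqdist); [now apply continuous_sqdist|apply continuous_tangent_length].
  - apply continuous_Rinv_comp; [now apply continuous_distance|lra].
Qed.

(* [psi] has right derivative [outer_rate u], or [0] when the UAV is not outside the circle of
   radius [ra]; which one occurs depends on the side from which the trajectory leaves the circle. *)
Definition rate_branch (u w : R) : Prop := w = outer_rate u \/ (w = 0 /\ distance u <= ra).

Lemma right_deriv_psi_of_near (u w : R) : 0 < u ->
  (forall eps, 0 < eps -> exists d, 0 < d /\ forall z, u < z < u + d -> Rabs (turn_rate z - w) <= eps) ->
  right_deriv psi u w.
Proof. intros Hu. apply right_deriv_of_RInt. intros v Hv. apply psi_sub_RInt. lra. Qed.

Lemma right_deriv_psi_outer (u d : R) : 0 < u -> 0 < distance u -> 0 < d ->
  (forall z, u < z < u + d -> ra <= distance z) -> right_deriv psi u (outer_rate u).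
Proof.
  intros Hu Hr Hd Hout. apply right_deriv_psi_of_near; [exact Hu|]. intros eps Heps.
  destruct (continuous_right_near outer_rate u eps (continuous_outer_rate u Hu Hr) Heps)
    as [d' [Hd' Hnear]].
  exists (Rmin d d'). split; [now apply Rmin_glb_lt|]. intros z Hz.
  pose proof (Rmin_l d d'). pose proof (Rmin_r d d').
  rewrite turn_rate_of_ge by (try apply Hout; lra).
  left. apply Hnear. lra.
Qed.

Lemma right_deriv_psi_inner (u d : R) : 0 < u -> 0 < d ->
  (forall z, u < z < u + d -> distance z < ra) -> right_deriv psi u 0.
Proof.
  intros Hu Hd Hin. apply right_deriv_psi_of_near; [exact Hu|]. intros eps Heps.
  exists d. split; [exact Hd|]. intros z Hz.
  rewrite turn_rate_of_lt by now apply Hin. rewrite Rminus_0_r, Rabs_R0. lra.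
Qed.

Lemma right_deriv_psi_tangent (u : R) : 0 < u -> distance u = ra -> rcos u = 0 ->
  right_deriv psi u (outer_rate u).
Proof.
  intros Hu Hr HA. pose proof ra_pos.
  assert (H0 : outer_rate u = 0).
  { unfold outer_rate. rewrite HA, tangent_length_of_le by (rewrite <- distance_sq, Hr; lra).
    unfold Rdiv. ring. }
  apply right_deriv_psi_of_near; [exact Hu|]. intros eps Heps.
  destruct (continuous_right_near outer_rate u eps (continuous_outer_rate u Hu ltac:(lra)) Heps)
    as [d [Hd Hnear]].
  exists d. split; [exact Hd|]. intros z Hz. specialize (Hnear z Hz). rewrite H0 in *.
  destruct (Rle_dec ra (distance z)).
  - rewrite turn_rate_of_ge by (auto; lra). lra.
  - rewrite turn_rate_of_lt by lra. rewrite Rminus_0_r, Rabs_R0. lra.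
Qed.

Lemma right_deriv_psi (u : R) : 0 < u -> exists w, right_deriv psi u w /\ rate_branch u w.
Proof.
  intros Hu. pose proof ra_pos.
  destruct (Rtotal_order ra (distance u)) as [Hgt|[Heq|Hlt]].
  - exists (outer_rate u). split; [|now left].
    destruct (continuous_right_near distance u (distance u - ra) (continuous_distance u Hu))
      as [d [Hd Hnear]]; [lra|].
    apply (right_deriv_psi_outer u d); [exact Hu|lra|exact Hd|].
    intros z Hz. specialize (Hnear z Hz). apply Rabs_lt_between in Hnear. lra.
  - set (l := - V * rcos u / distance u).
    assert (Hl : right_deriv distance u l)
      by (apply (right_deriv_of_is_derive distance); [apply is_derive_distance; lra|auto]).
    destruct (Rtotal_order (rcos u) 0) as [Aneg|[A0|Apos]].
    + exists (outer_rate u). split; [|now left].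
      assert (0 < l) by (unfold l; apply Rdiv_lt_0_compat; nra).
      destruct (Hl (l / 2) ltac:(lra)) as [d [Hd Hnear]].
      apply (right_deriv_psi_outer u d); [exact Hu|lra|exact Hd|].
      intros z Hz. specialize (Hnear z Hz). apply Rabs_le_between in Hnear. nra.
    + exists (outer_rate u). split; [now apply right_deriv_psi_tangent|now left].
    + exists 0. split; [|right; split; lra].
      assert (l < 0) by (unfold l, Rdiv; rewrite <- Heq; apply Rmult_neg_pos; [nra|now apply Rinv_0_lt_compat]).
      destruct (Hl (- l / 2) ltac:(lra)) as [d [Hd Hnear]].
      apply (right_deriv_psi_inner u d); [exact Hu|exact Hd|].
      intros z Hz. specialize (Hnear z Hz). apply Rabs_le_between in Hnear. nra.
  - exists 0. split; [|right; split; lra].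
    destruct (continuous_right_near distance u (ra - distance u) (continuous_distance u Hu))
      as [d [Hd Hnear]]; [lra|].
    apply (right_deriv_psi_inner u d); [exact Hu|exact Hd|].
    intros z Hz. specialize (Hnear z Hz). apply Rabs_lt_between in Hnear. lra.
Qed.

Lemma is_derive_rcos_along (p : R -> R) (u w : R) : 0 < u -> is_derive p u w -> p u = psi u ->
  is_derive (rcos_along p) u (- V - rsin u * w).
Proof.
  intros Hu Hp Hpu. unfold rcos_along. auto_derive.
  - repeat split; eexists; eauto.
  - replace (Derive (fun t => x t) u) with (V * cos (psi u)) by (symmetry; apply is_derive_unique; auto).
    replace (Derive (fun t => y t) u) with (V * sin (psi u)) by (symmetry; apply is_derive_unique; auto).
    replace (Derive (fun t => p t) u) with w by (symmetry; now apply is_derive_unique).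
    rewrite Hpu. unfold rsin, rsin_along.
    pose proof (sin2_cos2 (psi u)) as H. unfold Rsqr in H.
    transitivity (- V * (sin (psi u) * sin (psi u) + cos (psi u) * cos (psi u))
      - ((xT - x u) * sin (psi u) - (yT - y u) * cos (psi u)) * w); [ring|].
    rewrite H. ring.
Qed.

Lemma is_derive_rsin_along (p : R -> R) (u w : R) : 0 < u -> is_derive p u w -> p u = psi u ->
  is_derive (rsin_along p) u (rcos u * w).
Proof.
  intros Hu Hp Hpu. unfold rsin_along. auto_derive.
  - repeat split; eexists; eauto.
  - replace (Derive (fun t => x t) u) with (V * cos (psi u)) by (symmetry; apply is_derive_unique; auto).
    replace (Derive (fun t => y t) u) with (V * sin (psi u)) by (symmetry; apply is_derive_unique; auto).
    replace (Derive (fun t => p t) u) with w by (symmetry; now apply is_derive_unique).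
    rewrite Hpu. unfold rcos, rcos_along. ring.
Qed.

Lemma right_deriv_rcos (u w : R) : 0 < u -> right_deriv psi u w -> right_deriv rcos u (- V - rsin u * w).
Proof.
  intros Hu Hw.
  apply (right_deriv_of_is_derive (rcos_along (right_extension psi u w))).
  - apply is_derive_rcos_along; [exact Hu|now apply is_derive_right_extension|].
    apply right_extension_eq. lra.
  - intros v Hv. unfold rcos, rcos_along. now rewrite right_extension_eq.
Qed.

Lemma right_deriv_rsin (u w : R) : 0 < u -> right_deriv psi u w -> right_deriv rsin u (rcos u * w).
Proof.
  intros Hu Hw.
  apply (right_deriv_of_is_derive (rsin_along (right_extension psi u w))).
  - apply is_derive_rsin_along; [exact Hu|now apply is_derive_right_extension|].
    apply right_extension_eq. lra.
  - intros v Hv. unfold rsin, rsin_along. now rewrite right_extension_eq.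
Qed.

(* On the outer branch [lyapunov 0] grows at rate [k V rcos ^ 2 / r]; for small [eta] the cubic
   term gives, on both branches, a rate bounded below by a multiple of [rcos ^ 2]. *)
Definition lyapunov (eta t : R) : R := rsin t - k * potential ra (sqdist t) - eta * rcos t ^ 3.

Lemma continuous_lyapunov (eta t : R) : 0 < t -> continuous (lyapunov eta) t.
Proof.
  intros Ht. unfold lyapunov.
  apply (continuous_minus (fun t => rsin t - k * potential ra (sqdist t))).
  - apply (continuous_minus rsin); [now apply continuous_rsin|].
    apply (continuous_scal_r k (fun t => potential ra (sqdist t))).
    apply (continuous_comp sqdist); [now apply continuous_sqdist|].
    apply ex_derive_continuous. eexists. apply is_derive_potential, ra_pos.
  - apply (continuous_scal_r eta (fun t => rcos t ^ 3)).
    apply (continuous_comp rcos (fun z => z ^ 3)); [now apply continuous_rcos|].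
    apply (ex_derive_continuous (fun z => z ^ 3)). auto_derive. exact I.
Qed.

Lemma right_deriv_lyapunov (eta u w : R) : 0 < u -> right_deriv psi u w ->
  right_deriv (lyapunov eta) u
    (rcos u * w + k * V * rcos u * (tangent_length ra (sqdist u) / distance u)
     - eta * (3 * rcos u ^ 2 * (- V - rsin u * w))).
Proof.
  intros Hu Hw. set (p := right_extension psi u w).
  assert (Hp : is_derive p u w) by now apply is_derive_right_extension.
  assert (Hpu : p u = psi u) by (apply right_extension_eq; lra).
  pose proof (is_derive_rcos_along p u w Hu Hp Hpu) as HA.
  pose proof (is_derive_rsin_along p u w Hu Hp Hpu) as HD.
  pose proof (is_derive_potential ra ra_pos (sqdist u)) as HPhi.
  pose proof (is_derive_sqdist u Hu) as Hsq.
  apply (right_deriv_of_is_derive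
           (fun v => rsin_along p v - k * potential ra (sqdist v) - eta * rcos_along p v ^ 3)).
  - auto_derive.
    + repeat split; eexists; eauto.
    + replace (Derive (fun v => rcos_along p v) u) with (- V - rsin u * w)
        by (symmetry; now apply is_derive_unique).
      replace (Derive (fun v => rsin_along p v) u) with (rcos u * w)
        by (symmetry; now apply is_derive_unique).
      replace (Derive (fun v => potential ra v) (sqdist u)) with (potential_density ra (sqdist u))
        by (symmetry; now apply is_derive_unique).
      replace (Derive (fun v => sqdist v) u) with (-2 * V * rcos u)
        by (symmetry; now apply is_derive_unique).
      replace (rcos_along p u) with (rcos u) by (unfold rcos, rcos_along; now rewrite Hpu).
      replace (tangent_length ra (sqdist u) / distance u) with (2 * potential_density ra (sqdist u))
        by (apply two_potential_density; [exact ra_pos|apply sqdist_nonneg]).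
      ring.
  - intros v Hv. unfold lyapunov, rcos, rsin, rcos_along, rsin_along, p.
    now rewrite right_extension_eq.
Qed.

Lemma tangent_length_of_branch (u w : R) : w = 0 /\ distance u <= ra -> tangent_length ra (sqdist u) = 0.
Proof.
  intros [_ H]. apply tangent_length_of_le. rewrite <- distance_sq.
  pose proof (distance_nonneg u). pose proof ra_pos. nra.
Qed.

Lemma abs_rate_branch_le (u w : R) : rate_branch u w -> Rabs w <= 2 * k * V.
Proof.
  intros [->|[-> _]]; [apply abs_outer_rate_le|]. rewrite Rabs_R0. pose proof kV_pos. lra.
Qed.

Lemma lyapunov0_rate_nonneg (u w : R) : rate_branch u w ->
  0 <= rcos u * w + k * V * rcos u * (tangent_length ra (sqdist u) / distance u).
Proof.
  intros [->|Hw].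
  - replace (rcos u * outer_rate u + k * V * rcos u * (tangent_length ra (sqdist u) / distance u))
      with (k * V * rcos u ^ 2 * / distance u) by (unfold outer_rate, Rdiv; ring).
    pose proof kV_pos. pose proof (pow2_ge_0 (rcos u)).
    assert (0 <= / distance u).
    { destruct (Req_dec (distance u) 0) as [->|Hne]; [rewrite Rinv_0; lra|].
      pose proof (distance_nonneg u). left. apply Rinv_0_lt_compat. lra. }
    apply Rmult_le_pos; [nra|exact H1].
  - rewrite (tangent_length_of_branch u w Hw). destruct Hw as [-> _]. unfold Rdiv. lra.
Qed.

Lemma lyapunov0_nondecreasing (s t : R) : 0 < s <= t -> lyapunov 0 s <= lyapunov 0 t.
Proof.
  intros Hst. enough (0 * (t - s) <= lyapunov 0 t - lyapunov 0 s) by lra.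
  apply right_deriv_lower_bound; [lra|intros u Hu; apply continuous_lyapunov; lra|].
  intros u Hu. destruct (right_deriv_psi u ltac:(lra)) as [w [Hw Hb]].
  eexists. split; [apply (right_deriv_lyapunov 0 u w); [lra|exact Hw]|].
  pose proof (lyapunov0_rate_nonneg u w Hb). lra.
Qed.

(* [lyapunov 0] is nondecreasing, while [potential ra] grows linearly in [r ^ 2]. *)
Lemma distance_bounded : exists M, 0 < M /\ forall t, 1 <= t -> distance t <= M.
Proof.
  pose proof k_pos. pose proof ra_pos.
  set (c := lyapunov 0 1).
  assert (Hc0 : 0 <= 3 * Rabs c + 2 * k * ra ^ 2) by (pose proof (Rabs_pos c); nra).
  exists (1 + (3 + (3 * Rabs c + 2 * k * ra ^ 2)) / k). split.
  { assert (0 <= (3 + (3 * Rabs c + 2 * k * ra ^ 2)) / k) by (apply Rdiv_le_0_compat; lra). lra. }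
  intros t Ht. apply le_one_add_of_sq_le; [exact H|lra|exact Hc0|apply distance_nonneg|].
  pose proof (lyapunov0_nondecreasing 1 t ltac:(lra)) as Hmono. fold c in Hmono.
  unfold lyapunov in Hmono. rewrite !Rmult_0_l, !Rminus_0_r in Hmono.
  pose proof (abs_rsin_le t) as HD. apply Rabs_le_between in HD.
  pose proof (Rle_abs (- c)) as Hc. rewrite Rabs_Ropp in Hc.
  rewrite distance_sq. destruct (Rle_dec (2 * ra ^ 2) (sqdist t)) as [Hfar|Hnear].
  - pose proof (potential_ge ra ra_pos (sqdist t) Hfar).
    assert (k * ((sqdist t - 2 * ra ^ 2) / 3) <= k * potential ra (sqdist t))
      by (apply Rmult_le_compat_l; lra).
    lra.
  - pose proof (distance_nonneg t). pose proof (Rabs_pos c).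
    assert (k * sqdist t <= k * (2 * ra ^ 2)) by (apply Rmult_le_compat_l; lra).
    lra.
Qed.

Definition drift (t : R) : R := - V + k * V * signed_tangent ra (rsin t).

Lemma abs_rsin_tangent_sub_le (u : R) : 0 < distance u ->
  Rabs (rsin u * tangent_length ra (sqdist u) / distance u - signed_tangent ra (rsin u))
    <= 2 * Rabs (rcos u).
Proof.
  intros Hr.
  set (s := Rabs (rsin u)).
  assert (Hs : 0 <= s <= distance u) by (split; [apply Rabs_pos|apply abs_rsin_le]).
  assert (Hss : s ^ 2 = rsin u ^ 2) by apply pow2_abs.
  assert (Hq : Rabs (tangent_length ra (sqdist u) - tangent_length ra (s ^ 2)) <= Rabs (rcos u)).
  { eapply Rle_trans; [apply abs_tangent_length_sub_le|].
    rewrite sqdist_eq, Hss. replace (rcos u ^ 2 + rsin u ^ 2 - rsin u ^ 2) with (rcos u ^ 2) by ring.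
    rewrite Rabs_pos_eq by apply pow2_ge_0. rewrite <- pow2_abs, sqrt_pow2 by apply Rabs_pos. lra. }
  assert (Hq' : 0 <= tangent_length ra (s ^ 2) <= s).
  { split; [apply tangent_length_nonneg|].
    eapply Rle_trans; [apply tangent_length_le_sqrt; nra|]. rewrite sqrt_pow2; lra. }
  pose proof (right_triangle_estimate (distance u) s (rcos u) _ _ Hr Hs
                ltac:(rewrite distance_sq, sqdist_eq, Hss; ring) Hq Hq') as H.
  rewrite Hss in H. unfold signed_tangent, s in *. destruct (Rle_dec 0 (rsin u)).
  - rewrite (Rabs_pos_eq (rsin u)) in H by lra. exact H.
  - rewrite (Rabs_left (rsin u)) in H by lra. rewrite <- Rabs_Ropp.
    replace (- (rsin u * tangent_length ra (sqdist u) / distance u - - tangent_length ra (rsin u ^ 2)))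
      with (- rsin u * tangent_length ra (sqdist u) / distance u - tangent_length ra (rsin u ^ 2))
      by (field; lra).
    exact H.
Qed.

Lemma abs_rcos_rate_sub_drift_le (u w : R) : rate_branch u w ->
  Rabs ((- V - rsin u * w) - drift u) <= 3 * k * V * Rabs (rcos u).
Proof.
  intros Hb. pose proof kV_pos. pose proof ra_pos. pose proof (Rabs_pos (rcos u)).
  destruct Hb as [->|[-> Hr]].
  - destruct (Req_dec (distance u) 0) as [Hr0|Hr0].
    + assert (Hsq : sqdist u = 0) by (rewrite <- distance_sq, Hr0; ring).
      rewrite sqdist_eq in Hsq.
      assert (Hzero : rsin u = 0) by nra.
      unfold drift. rewrite Hzero, signed_tangent_of_le by nra.
      replace (- V - 0 * outer_rate u - (- V + k * V * 0)) with 0 by ring.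
      rewrite Rabs_R0. nra.
    + assert (Hr : 0 < distance u) by (pose proof (distance_nonneg u); lra).
      pose proof (abs_rsin_tangent_sub_le u Hr) as Htan.
      assert (Hlin : Rabs (rsin u * rcos u / distance u) <= Rabs (rcos u)).
      { unfold Rdiv. rewrite !Rabs_mult, Rabs_inv, (Rabs_pos_eq (distance u)) by lra.
        pose proof (abs_rsin_le u). pose proof (Rabs_pos (rsin u)).
        apply (Rmult_le_reg_r (distance u)); [exact Hr|].
        rewrite Rmult_assoc, Rinv_l by lra. nra. }
      unfold drift, outer_rate.
      replace (- V - rsin u * (k * V * (rcos u - tangent_length ra (sqdist u)) / distance u)
               - (- V + k * V * signed_tangent ra (rsin u)))
        with (- (k * V) * (rsin u * rcos u / distance u
               - (rsin u * tangent_length ra (sqdist u) / distance u - signed_tangent ra (rsin u))))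
        by (field; lra).
      rewrite Rabs_mult, Rabs_Ropp, Rabs_pos_eq by lra.
      replace (3 * k * V * Rabs (rcos u)) with (k * V * (3 * Rabs (rcos u))) by ring.
      apply Rmult_le_compat_l; [lra|].
      unfold Rminus at 1. eapply Rle_trans; [apply Rabs_triang|]. rewrite Rabs_Ropp. lra.
  - unfold drift. rewrite signed_tangent_of_le.
    + replace (- V - rsin u * 0 - (- V + k * V * 0)) with 0 by ring. rewrite Rabs_R0. nra.
    + pose proof (abs_rsin_le u). rewrite <- pow2_abs. pose proof (Rabs_pos (rsin u)). nra.
Qed.

Section Bounded.

Variable M : R.
Hypothesis M_pos : 0 < M.
Hypothesis distance_le_M : forall t, 1 <= t -> distance t <= M.

Definition eta : R := 1 / (12 * M ^ 2).
Definition gain : R := Rmin (k * V / (2 * M)) (V / (4 * M ^ 2)).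
Definition rcos_speed : R := V + 2 * k * V * M.

Lemma eta_pos : 0 < eta.
Proof. unfold eta. apply Rdiv_lt_0_compat; nra. Qed.

Lemma gain_pos : 0 < gain.
Proof. pose proof kV_pos. unfold gain. apply Rmin_glb_lt; apply Rdiv_lt_0_compat; nra. Qed.

Lemma rcos_speed_pos : 0 < rcos_speed.
Proof. pose proof kV_pos. unfold rcos_speed. nra. Qed.

Lemma abs_rsin_mul_rate_le (u w : R) : 1 <= u -> rate_branch u w -> Rabs (rsin u * w) <= 2 * k * V * M.
Proof.
  intros Hu Hb. rewrite Rabs_mult.
  pose proof (abs_rsin_le u). pose proof (distance_le_M u Hu). pose proof (abs_rate_branch_le u w Hb).
  replace (2 * k * V * M) with (M * (2 * k * V)) by ring.
  apply Rmult_le_compat; [apply Rabs_pos|apply Rabs_pos|lra|exact H1].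
Qed.

Lemma abs_rcos_rate_le (u w : R) : 1 <= u -> rate_branch u w -> Rabs (- V - rsin u * w) <= rcos_speed.
Proof.
  intros Hu Hb. pose proof (abs_rsin_mul_rate_le u w Hu Hb).
  unfold rcos_speed. unfold Rminus. eapply Rle_trans; [apply Rabs_triang|].
  rewrite Rabs_Ropp, Rabs_Ropp, Rabs_pos_eq by lra. lra.
Qed.

Lemma lyapunov_rate_ge (u w : R) : 1 <= u -> rate_branch u w ->
  gain * rcos u ^ 2 <= rcos u * w + k * V * rcos u * (tangent_length ra (sqdist u) / distance u)
                       - eta * (3 * rcos u ^ 2 * (- V - rsin u * w)).
Proof.
  intros Hu Hb. pose proof kV_pos. pose proof eta_pos. pose proof (pow2_ge_0 (rcos u)).
  pose proof (Rmin_l (k * V / (2 * M)) (V / (4 * M ^ 2))) as Hg1.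
  pose proof (Rmin_r (k * V / (2 * M)) (V / (4 * M ^ 2))) as Hg2. fold gain in Hg1, Hg2.
  destruct Hb as [->|Hb].
  - pose proof (abs_rsin_mul_rate_le u _ Hu (or_introl eq_refl)) as HDw.
    apply Rabs_le_between in HDw.
    replace (rcos u * outer_rate u + k * V * rcos u * (tangent_length ra (sqdist u) / distance u))
      with (k * V * rcos u ^ 2 * / distance u) by (unfold outer_rate, Rdiv; ring).
    assert (Hfirst : k * V * rcos u ^ 2 / M <= k * V * rcos u ^ 2 * / distance u).
    { destruct (Req_dec (rcos u) 0) as [->|HA0]; [unfold Rdiv; lra|].
      pose proof (abs_rcos_le u). pose proof (Rabs_pos_lt _ HA0).
      pose proof (distance_le_M u Hu).
      apply Rmult_le_compat_l; [nra|]. apply Rinv_le_contravar; lra. }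
    assert (Hsecond : eta * (3 * rcos u ^ 2 * (- V - rsin u * outer_rate u))
                      <= k * V * rcos u ^ 2 / (2 * M)).
    { replace (k * V * rcos u ^ 2 / (2 * M)) with (eta * (3 * rcos u ^ 2 * (2 * k * V * M)))
        by (unfold eta; field; lra).
      apply Rmult_le_compat_l; [lra|]. apply Rmult_le_compat_l; lra. }
    assert (gain * rcos u ^ 2 <= k * V * rcos u ^ 2 / (2 * M)).
    { replace (k * V * rcos u ^ 2 / (2 * M)) with (k * V / (2 * M) * rcos u ^ 2) by (field; lra).
      now apply Rmult_le_compat_r. }
    replace (k * V * rcos u ^ 2 / M) with (2 * (k * V * rcos u ^ 2 / (2 * M))) in Hfirst
      by (field; lra).
    lra.
  - rewrite (tangent_length_of_branch u w Hb). destruct Hb as [-> _].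
    assert (gain * rcos u ^ 2 <= V / (4 * M ^ 2) * rcos u ^ 2) by (apply Rmult_le_compat_r; lra).
    replace (V / (4 * M ^ 2) * rcos u ^ 2) with (eta * (3 * rcos u ^ 2 * V)) in H2
      by (unfold eta; field; lra).
    unfold Rdiv. lra.
Qed.

Lemma abs_rcos_sub_le (s t : R) : 1 <= s <= t -> Rabs (rcos t - rcos s) <= rcos_speed * (t - s).
Proof.
  intros Hst. replace (rcos t - rcos s) with (rcos t - rcos s - 0 * (t - s)) by ring.
  apply right_deriv_increment_bound; [lra|intros u Hu; apply continuous_rcos; lra|].
  intros u Hu. destruct (right_deriv_psi u ltac:(lra)) as [w [Hw Hb]].
  exists (- V - rsin u * w). split; [apply right_deriv_rcos; [lra|exact Hw]|].
  rewrite Rminus_0_r. apply abs_rcos_rate_le; [lra|exact Hb].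
Qed.

Lemma lyapunov_increase (s t m : R) : 1 <= s <= t -> (forall u, s <= u <= t -> m <= rcos u ^ 2) ->
  gain * m * (t - s) <= lyapunov eta t - lyapunov eta s.
Proof.
  intros Hst Hm. pose proof gain_pos.
  apply right_deriv_lower_bound; [lra|intros u Hu; apply continuous_lyapunov; lra|].
  intros u Hu. destruct (right_deriv_psi u ltac:(lra)) as [w [Hw Hb]].
  eexists. split; [apply right_deriv_lyapunov; [lra|exact Hw]|].
  pose proof (lyapunov_rate_ge u w ltac:(lra) Hb). specialize (Hm u ltac:(lra)). nra.
Qed.

Lemma lyapunov_nondecreasing (s t : R) : 1 <= s <= t -> lyapunov eta s <= lyapunov eta t.
Proof.
  intros Hst. pose proof (lyapunov_increase s t 0 Hst ltac:(intros; apply pow2_ge_0)). lra.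
Qed.

Lemma lyapunov_le (t : R) : 1 <= t -> lyapunov eta t <= M + eta * M ^ 3.
Proof.
  intros Ht. unfold lyapunov. pose proof eta_pos. pose proof k_pos.
  pose proof (distance_le_M t Ht).
  pose proof (abs_rsin_le t) as HD. apply Rabs_le_between in HD.
  pose proof (potential_nonneg ra ra_pos (sqdist t)).
  assert (- rcos t ^ 3 <= M ^ 3).
  { assert (Rabs (rcos t) ^ 3 <= M ^ 3)
      by (apply pow_incr; split; [apply Rabs_pos|pose proof (abs_rcos_le t); lra]).
    rewrite RPow_abs in H3. pose proof (Rle_abs (- rcos t ^ 3)). rewrite Rabs_Ropp in H4. lra. }
  nra.
Qed.

(* A bounded nondecreasing Lyapunov function whose rate dominates [rcos ^ 2], with [rcos]
   Lipschitz: an excursion [|rcos t| > e] would last long enough to raise it by a fixed amount. *)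
Lemma rcos_small_eventually (e : R) : 0 < e ->
  exists T, 1 <= T /\ forall t, T <= t -> Rabs (rcos t) <= e.
Proof.
  intros He. pose proof rcos_speed_pos. pose proof gain_pos.
  set (tau := e / (2 * rcos_speed)).
  assert (Htau : 0 < tau) by (apply Rdiv_lt_0_compat; lra).
  destruct (eventually_small_increments (lyapunov eta) 1 (M + eta * M ^ 3)
              lyapunov_nondecreasing lyapunov_le (gain * (e ^ 2 / 4) * tau)) as [T [HT Hinc]].
  { apply Rmult_lt_0_compat; [|exact Htau]. apply Rmult_lt_0_compat; [exact H0|nra]. }
  exists T. split; [exact HT|]. intros t Ht. apply Rnot_lt_le. intros Hlt.
  assert (Hfar : forall u, t <= u <= t + tau -> e ^ 2 / 4 <= rcos u ^ 2).
  { intros u Hu. pose proof (abs_rcos_sub_le t u ltac:(lra)) as Hl.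
    assert (rcos_speed * (u - t) <= e / 2).
    { replace (e / 2) with (rcos_speed * tau) by (unfold tau; field; lra).
      apply Rmult_le_compat_l; lra. }
    pose proof (Rabs_triang_inv (rcos t) (rcos u)). rewrite Rabs_minus_sym in Hl.
    rewrite <- (pow2_abs (rcos u)). nra. }
  pose proof (lyapunov_increase t (t + tau) (e ^ 2 / 4) ltac:(lra) Hfar) as Hgain.
  specialize (Hinc t (t + tau) ltac:(lra)).
  replace (t + tau - t) with tau in Hgain by ring. lra.
Qed.

Lemma abs_rsin_sub_le (t v d : R) : 1 <= t <= v -> (forall u, t <= u <= v -> Rabs (rcos u) <= d) ->
  Rabs (rsin v - rsin t) <= 2 * k * V * d * (v - t).
Proof.
  intros Htv Hd. replace (rsin v - rsin t) with (rsin v - rsin t - 0 * (v - t)) by ring.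
  apply right_deriv_increment_bound; [lra|intros u Hu; apply continuous_rsin; lra|].
  intros u Hu. destruct (right_deriv_psi u ltac:(lra)) as [w [Hw Hb]].
  exists (rcos u * w). split; [apply right_deriv_rsin; [lra|exact Hw]|].
  rewrite Rminus_0_r, Rabs_mult.
  replace (2 * k * V * d) with (d * (2 * k * V)) by ring.
  apply Rmult_le_compat; [apply Rabs_pos|apply Rabs_pos|apply Hd; lra|exact (abs_rate_branch_le u w Hb)].
Qed.

Lemma abs_drift_sub_le (t v : R) : 1 <= t -> 1 <= v -> Rabs (rsin v - rsin t) <= ra ->
  Rabs (drift v - drift t) <= k * V * sqrt (2 * M * Rabs (rsin v - rsin t)).
Proof.
  intros Ht Hv Hra. pose proof kV_pos.
  unfold drift.
  replace (- V + k * V * signed_tangent ra (rsin v) - (- V + k * V * signed_tangent ra (rsin t)))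
    with (k * V * (signed_tangent ra (rsin v) - signed_tangent ra (rsin t))) by ring.
  rewrite Rabs_mult, (Rabs_pos_eq (k * V)) by lra.
  apply Rmult_le_compat_l; [lra|].
  eapply Rle_trans; [now apply abs_signed_tangent_sub_le|]. apply sqrt_le_1_alt.
  replace (rsin v ^ 2 - rsin t ^ 2) with ((rsin v - rsin t) * (rsin v + rsin t)) by ring.
  rewrite Rabs_mult, (Rmult_comm (2 * M)).
  apply Rmult_le_compat_l; [apply Rabs_pos|].
  pose proof (abs_rsin_le v). pose proof (abs_rsin_le t).
  pose proof (distance_le_M v Hv). pose proof (distance_le_M t Ht).
  eapply Rle_trans; [apply Rabs_triang|]. lra.
Qed.

(* Over [t, t + 1] the increment of [rcos] is [drift t] up to a small error, and it is at
   most [2 d] since [rcos] stays small. *)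
Lemma abs_drift_le (t d : R) : 1 <= t -> 2 * k * V * d <= ra ->
  (forall u, t <= u <= t + 1 -> Rabs (rcos u) <= d) ->
  Rabs (drift t) <= 2 * d + 3 * k * V * d + k * V * sqrt (4 * M * k * V * d).
Proof.
  intros Ht Hra Hd. pose proof kV_pos.
  assert (Hd0 : 0 <= d) by (pose proof (Hd t ltac:(lra)); pose proof (Rabs_pos (rcos t)); lra).
  assert (Hdrift : forall v, t <= v <= t + 1 -> Rabs (drift v - drift t) <= k * V * sqrt (4 * M * k * V * d)).
  { intros v Hv.
    assert (HD : Rabs (rsin v - rsin t) <= 2 * k * V * d).
    { pose proof (abs_rsin_sub_le t v d ltac:(lra) ltac:(intros; apply Hd; lra)).
      assert (2 * k * V * d * (v - t) <= 2 * k * V * d * 1) by (apply Rmult_le_compat_l; nra).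
      lra. }
    eapply Rle_trans; [apply abs_drift_sub_le; lra|].
    apply Rmult_le_compat_l; [lra|]. apply sqrt_le_1_alt. nra. }
  assert (Hinc : Rabs (rcos (t + 1) - rcos t - drift t * (t + 1 - t))
                 <= (3 * k * V * d + k * V * sqrt (4 * M * k * V * d)) * (t + 1 - t)).
  { apply right_deriv_increment_bound; [lra|intros u Hu; apply continuous_rcos; lra|].
    intros u Hu. destruct (right_deriv_psi u ltac:(lra)) as [w [Hw Hb]].
    exists (- V - rsin u * w). split; [apply right_deriv_rcos; [lra|exact Hw]|].
    pose proof (abs_rcos_rate_sub_drift_le u w Hb).
    assert (3 * k * V * Rabs (rcos u) <= 3 * k * V * d) by (apply Rmult_le_compat_l; [lra|apply Hd; lra]).
    specialize (Hdrift u ltac:(lra)).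
    replace (- V - rsin u * w - drift t) with ((- V - rsin u * w - drift u) + (drift u - drift t)) by ring.
    eapply Rle_trans; [apply Rabs_triang|]. lra. }
  replace (t + 1 - t) with 1 in Hinc by ring.
  pose proof (Hd t ltac:(lra)). pose proof (Hd (t + 1) ltac:(lra)).
  apply Rabs_le_between in Hinc. apply Rabs_le_between in H0. apply Rabs_le_between in H1.
  apply Rabs_le_between. lra.
Qed.

Lemma drift_small_eventually (e : R) : 0 < e ->
  exists T, forall t, T <= t -> Rabs (drift t) <= e.
Proof.
  intros He. pose proof kV_pos. pose proof ra_pos. pose proof k_pos.
  set (d := Rmin (Rmin (e / 8) (e / (12 * (k * V)))) (Rmin (ra / (2 * (k * V))) (e ^ 2 / (64 * M * (k * V) ^ 3)))).
  assert (Hc : 0 < 64 * M * (k * V) ^ 3) by (pose proof (pow_lt (k * V) 3 H); nra).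
  assert (He2 : 0 < e ^ 2) by (apply pow_lt; lra).
  assert (Hd : 0 < d) by (unfold d; repeat apply Rmin_glb_lt; apply Rdiv_lt_0_compat; lra).
  assert (Hd1 : d <= e / 8) by (unfold d; eapply Rle_trans; [apply Rmin_l|apply Rmin_l]).
  assert (Hd2 : d <= e / (12 * (k * V))) by (unfold d; eapply Rle_trans; [apply Rmin_l|apply Rmin_r]).
  assert (Hd3 : d <= ra / (2 * (k * V))) by (unfold d; eapply Rle_trans; [apply Rmin_r|apply Rmin_l]).
  assert (Hd4 : d <= e ^ 2 / (64 * M * (k * V) ^ 3))
    by (unfold d; eapply Rle_trans; [apply Rmin_r|apply Rmin_r]).
  destruct (rcos_small_eventually d Hd) as [T [HT HA]].
  exists T. intros t Ht.
  eapply Rle_trans; [apply abs_drift_le; [lra| |intros u Hu; apply HA; lra]|].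
  { assert (Hra : 2 * (k * V) * d <= 2 * (k * V) * (ra / (2 * (k * V))))
      by (apply Rmult_le_compat_l; lra).
    replace (2 * (k * V) * (ra / (2 * (k * V)))) with ra in Hra by (field; lra). lra. }
  assert (3 * k * V * d <= e / 4).
  { assert (He4 : 3 * (k * V) * d <= 3 * (k * V) * (e / (12 * (k * V))))
      by (apply Rmult_le_compat_l; lra).
    replace (3 * (k * V) * (e / (12 * (k * V)))) with (e / 4) in He4 by (field; lra). lra. }
  assert (k * V * sqrt (4 * M * k * V * d) <= e / 4).
  { replace (k * V * sqrt (4 * M * k * V * d)) with (sqrt ((k * V) ^ 2 * (4 * M * k * V * d)))
      by (rewrite sqrt_mult_alt, sqrt_pow2 by nra; reflexivity).
    rewrite <- (sqrt_pow2 (e / 4)) by lra. apply sqrt_le_1_alt.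
    replace ((k * V) ^ 2 * (4 * M * k * V * d)) with (4 * M * (k * V) ^ 3 * d) by ring.
    replace ((e / 4) ^ 2) with (4 * M * (k * V) ^ 3 * (e ^ 2 / (64 * M * (k * V) ^ 3))) by (field; lra).
    apply Rmult_le_compat_l; [lra|exact Hd4]. }
  lra.
Qed.

End Bounded.

Lemma is_lim_rcos : is_lim rcos p_infty 0.
Proof.
  destruct distance_bounded as [M [HM HdM]].
  apply is_lim_p_infty_of_eventually. intros e He.
  destruct (rcos_small_eventually M HM HdM e He) as [T [_ HT]].
  exists T. intros t Ht. rewrite Rminus_0_r. now apply HT.
Qed.

Lemma is_lim_signed_tangent : is_lim (fun t => signed_tangent ra (rsin t)) p_infty (1 / k).
Proof.
  pose proof kV_pos. pose proof k_pos.
  destruct distance_bounded as [M [HM HdM]].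
  apply is_lim_p_infty_of_eventually. intros e He.
  destruct (drift_small_eventually M HM HdM (k * V * e) ltac:(nra)) as [T HT].
  exists T. intros t Ht. specialize (HT t Ht). unfold drift in HT.
  replace (- V + k * V * signed_tangent ra (rsin t)) with (k * V * (signed_tangent ra (rsin t) - 1 / k))
    in HT by (field; lra).
  rewrite Rabs_mult, (Rabs_pos_eq (k * V)) in HT by lra.
  apply (Rmult_le_reg_l (k * V)); lra.
Qed.

Lemma signed_tangent_pos_eventually : exists T, forall t, T < t -> 0 < signed_tangent ra (rsin t).
Proof.
  pose proof k_pos. assert (Hk : 0 < 1 / k) by (apply Rdiv_lt_0_compat; lra).
  destruct (proj2 (is_lim_spec _ _ _) is_lim_signed_tangent (mkposreal _ Hk)) as [T HT].
  exists T. intros t Ht. specialize (HT t Ht). simpl in HT. apply Rabs_lt_between in HT. lra.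
Qed.

Lemma is_lim_rsin : is_lim rsin p_infty rd.
Proof.
  pose proof k_pos. destruct signed_tangent_pos_eventually as [T HT].
  apply (is_lim_ext_loc (fun t => sqrt (signed_tangent ra (rsin t) ^ 2 + ra ^ 2))).
  { exists T. intros t Ht. symmetry. now apply eq_sqrt_of_signed_tangent_pos, HT. }
  replace rd with (sqrt ((1 / k) ^ 2 + ra ^ 2)).
  - apply (is_lim_continuous_comp _ (fun s => sqrt (s ^ 2 + ra ^ 2))); [exact is_lim_signed_tangent|].
    apply continuous_sqrt_comp. apply (ex_derive_continuous (fun s => s ^ 2 + ra ^ 2)).
    auto_derive. exact I.
  - rewrite ra_sq. replace ((1 / k) ^ 2 + (rd ^ 2 - 1 / k ^ 2)) with (rd ^ 2) by (field; lra).
    apply sqrt_pow2. lra.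
Qed.

Lemma is_lim_distance : is_lim distance p_infty rd.
Proof.
  apply (is_lim_ext (fun t => sqrt (rcos t ^ 2 + rsin t ^ 2))).
  { intros t. change (sqrt (rcos t ^ 2 + rsin t ^ 2) = sqrt (sqdist t)). now rewrite sqdist_eq. }
  replace rd with (sqrt (0 ^ 2 + rd ^ 2))
    by (replace (0 ^ 2 + rd ^ 2) with (rd ^ 2) by ring; apply sqrt_pow2; lra).
  apply (is_lim_continuous_comp (fun t => rcos t ^ 2 + rsin t ^ 2) sqrt); [|apply continuous_sqrt].
  apply is_lim_plus'; apply (is_lim_continuous_comp _ (fun z => z ^ 2));
    [exact is_lim_rcos| |exact is_lim_rsin|];
    apply (ex_derive_continuous (fun z => z ^ 2)); auto_derive; exact I.
Qed.

Lemma is_lim_bearing : is_lim (fun t => bearing xT yT (x t) (y t) (psi t)) p_infty (PI / 2).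
Proof.
  destruct signed_tangent_pos_eventually as [T HT].
  apply (is_lim_ext_loc (fun t => acos (rcos t / distance t))).
  { exists T. intros t Ht. specialize (HT t Ht).
    assert (Hd : 0 < rsin t).
    { unfold signed_tangent in HT. destruct (Rle_dec 0 (rsin t)) as [Hd|Hd];
        [|pose proof (tangent_length_nonneg ra (rsin t ^ 2)); lra].
      destruct (Req_dec (rsin t) 0) as [Hz|Hz]; [|lra].
      rewrite Hz, tangent_length_of_le in HT; [lra|]. pose proof ra_pos. nra. }
    assert (Hr : 0 < distance t)
      by (pose proof (abs_rsin_le t) as Hle; rewrite Rabs_pos_eq in Hle; lra).
    unfold bearing. cbv zeta. fold (distance t).
    change ((xT - x t) * cos (psi t) + (yT - y t) * sin (psi t)) with (rcos t).
    change ((xT - x t) * sin (psi t) - (yT - y t) * cos (psi t)) with (rsin t).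
    destruct (Rle_dec 0 (rsin t / distance t)) as [_|Hn]; [reflexivity|].
    exfalso. apply Hn. left. now apply Rdiv_lt_0_compat. }
  rewrite <- acos_0. replace 0 with (0 / rd) at 1 by (field; lra).
  apply (is_lim_continuous_comp (fun t => rcos t / distance t) acos).
  - apply (is_lim_div rcos distance p_infty 0 rd is_lim_rcos is_lim_distance).
    + intros H. injection H. lra.
    + exact I.
  - rewrite Rdiv_0_l. apply continuity_pt_filterlim, derivable_continuous_pt, derivable_pt_acos. lra.
Qed.

End Guidance.

Theorem theorem1 (xT yT V rd k : R) (x y psi : R -> R) :
  0 < V -> 0 < rd -> 1 / rd < k ->
  (forall t, 0 < t -> is_derive x t (V * cos (psi t))) ->
  (forall t, 0 < t -> is_derive y t (V * sin (psi t))) ->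
  (forall t, 0 <= t ->
     is_RInt (fun s => control V k rd (dist_to_target xT yT (x s) (y s))
                         (Derive (fun u => dist_to_target xT yT (x u) (y u)) s))
             0 t (psi t - psi 0)) ->
  is_lim (fun t => dist_to_target xT yT (x t) (y t)) p_infty rd /\
  is_lim (fun t => bearing xT yT (x t) (y t) (psi t)) p_infty (PI / 2).
Proof.
  intros HV Hrd Hk Hx Hy Hpsi. split.
  - exact (is_lim_distance xT yT V rd k x y psi HV Hrd Hk Hx Hy Hpsi).
  - exact (is_lim_bearing xT yT V rd k x y psi HV Hrd Hk Hx Hy Hpsi).
Qed.
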